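(* Let $T=(T_1,T_2)$ be a toral $2$-isometry on a complex Hilbert space $\mathcal H$. Then: (i) for all integers $k,l\ge0$, $$T_1^{*k}T_2^{*l}T_2^lT_1^k=T_1^{*k}T_1^k+T_2^{*l}T_2^l-I=kT_1^*T_1+lT_2^*T_2-(k+l-1)I;$$ (ii) if $f_0\in\ker T^*=\ker T_1^*\cap\ker T_2^*$ satisfies $\langle T_1^mf_0,T_1^pT_2^qf_0\rangle=0$ for all $q\ge1$, $m,p\ge0$, and $\langle T_2^nf_0,T_1^pT_2^qf_0\rangle=0$ for all $p\ge1$, $n,q\ge0$, then for all $m,n,p,q\ge0$, $$\langle T_1^mT_2^nf_0,T_1^pT_2^qf_0\rangle=\begin{cases}0 & m\ne p,\ n\ne q,\\ \langle T_2^nf_0,T_2^qf_0\rangle & m=p,\ n\ne q,\\ \langle T_1^mf_0,T_1^pf_0\rangle & m\ne p,\ n=q,\\ \|T_1^mf_0\|^2+\|T_2^nf_0\|^2-\|f_0\|^2 & m=p,\ n=q.\end{cases}$$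
   Context: A commuting pair $T=(T_1,T_2)$ of bounded operators on $\mathcal H$ is a toral $2$-isometry if $I-T_i^*T_i-T_j^*T_j+T_j^*T_i^*T_iT_j=0$ for all $i,j\in\{1,2\}$. *)

From mathcomp Require Export all_boot all_algebra complex.
From mathcomp Require Export reals.
Export GRing.Theory Num.Theory.
Set Implicit Arguments.
Unset Strict Implicit.
Unset Printing Implicit Defensive.
Local Open Scope ring_scope.
Local Open Scope complex_scope.

Definition is_inner_product (R : realType) (V : lmodType R[i])
  (ip : V -> V -> R[i]) : Prop :=
  [/\ (forall (a : R[i]) (x y z : V), ip (a *: x + y) z = a * ip x z + ip y z),
      (forall x y : V, ip y x = (ip x y)^*),
      (forall x : V, 0 <= ip x x) &
      (forall x : V, ip x x = 0 -> x = 0)].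

Definition ipnorm (R : realType) (V : lmodType R[i]) (ip : V -> V -> R[i])
  (x : V) : R := Num.sqrt (complex.Re (ip x x)).

Definition ip_complete (R : realType) (V : lmodType R[i])
  (ip : V -> V -> R[i]) : Prop :=
  forall u : nat -> V,
    (forall e : R, 0 < e -> exists N : nat, forall m n : nat,
        (N <= m)%N -> (N <= n)%N -> ipnorm ip (u m - u n) < e) ->
    exists l : V, forall e : R, 0 < e -> exists N : nat, forall n : nat,
        (N <= n)%N -> ipnorm ip (u n - l) < e.

Definition is_hilbert (R : realType) (V : lmodType R[i])
  (ip : V -> V -> R[i]) : Prop := is_inner_product ip /\ ip_complete ip.

Definition bounded_op (R : realType) (V : lmodType R[i])
  (ip : V -> V -> R[i]) (T : V -> V) : Prop :=
  (forall (a : R[i]) (x y : V), T (a *: x + y) = a *: T x + T y) /\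
  exists M : R, forall x : V, ipnorm ip (T x) <= M * ipnorm ip x.

Definition is_adjoint (R : realType) (V : lmodType R[i])
  (ip : V -> V -> R[i]) (T Ts : V -> V) : Prop :=
  forall x y : V, ip (T x) y = ip x (Ts y).

Definition toral_2isometry (R : realType) (V : lmodType R[i])
  (T Ts : 'I_2 -> V -> V) : Prop :=
  forall (i j : 'I_2) (x : V),
    x - Ts i (T i x) - Ts j (T j x) + Ts j (Ts i (T i (T j x))) = 0.

(** Pairing the toral identity for (i, j) with a vector z gives
    <T_i T_j x, T_i T_j z> = <T_i x, T_i z> + <T_j x, T_j z> - <x, z>.
    Iterating it yields a closed form for <T_j^l T_i^k x, T_j^l T_i^k z>, which is
    (i) once the adjoints are moved back, since a vector is determined by its inner
    products.  For (ii), the same identity with (i, j) = (1, 2) expresses the inner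
    product at (m+1, n+1, p+1, q+1) through those at (m+1, n, p+1, q),
    (m, n+1, p, q+1) and (m, n, p, q), so an induction on m + n reduces everything to
    the boundary cases where one exponent vanishes; there the hypotheses on f0 apply. *)
From mathcomp Require Import ring zify.

Set Implicit Arguments.
Unset Strict Implicit.
Unset Printing Implicit Defensive.
Local Open Scope ring_scope.
Local Open Scope complex_scope.

Section InnerProduct.
Variables (R : realType) (V : lmodType R[i]) (ip : V -> V -> R[i]).
Hypothesis ip_inner : is_inner_product ip.

Lemma ipDZl a x y z : ip (a *: x + y) z = a * ip x z + ip y z.
Proof. by case: ip_inner. Qed.

Lemma ip_conj x y : ip y x = (ip x y)^*.
Proof. by case: ip_inner. Qed.

Lemma ip0l z : ip 0 z = 0.
Proof.
have := ipDZl 1 0 0 z; rewrite scale1r addr0 mul1r => ip0_double.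
by apply: (addrI (ip 0 z)); rewrite addr0 -ip0_double.
Qed.

Lemma ipDl x y z : ip (x + y) z = ip x z + ip y z.
Proof. by have := ipDZl 1 x y z; rewrite scale1r mul1r. Qed.

Lemma ipZl a x z : ip (a *: x) z = a * ip x z.
Proof. by have := ipDZl a x 0 z; rewrite addr0 ip0l addr0. Qed.

Lemma ipNl x z : ip (- x) z = - ip x z.
Proof. by rewrite -scaleN1r ipZl mulN1r. Qed.

Lemma ipBl x y z : ip (x - y) z = ip x z - ip y z.
Proof. by rewrite ipDl ipNl. Qed.

Lemma ip_ext u v : (forall z, ip u z = ip v z) -> u = v.
Proof.
move=> eq_uv; apply/eqP; rewrite -subr_eq0; apply/eqP.
by case: ip_inner => _ _ _; apply; rewrite ipBl eq_uv subrr.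
Qed.

Lemma ipnorm_sqr x : ((ipnorm ip x) ^+ 2)%:C = ip x x.
Proof.
case: ip_inner => _ _ ip_ge0 _; have := ip_ge0 x; rewrite /ipnorm.
case: (ip x x) => a b; rewrite lecE /= => /andP[/eqP -> a_ge0].
by rewrite sqr_sqrtr.
Qed.

Section Adjoint.
Variables (T Ts : V -> V).
Hypothesis adjT : is_adjoint ip T Ts.

Lemma ip_adjr x y : ip x (T y) = ip (Ts x) y.
Proof. by rewrite ip_conj adjT -ip_conj. Qed.

Lemma ip_iter_adjl k x y : ip (iter k Ts x) y = ip x (iter k T y).
Proof. by elim: k x y => [//|k IHk] x y; rewrite iterS -ip_adjr IHk iterSr. Qed.

Lemma ip_adj0r f y : Ts f = 0 -> ip f (T y) = 0.
Proof. by move=> Tsf0; rewrite ip_adjr Tsf0 ip0l. Qed.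

Lemma ip_adj0l f y : Ts f = 0 -> ip (T y) f = 0.
Proof. by move=> Tsf0; rewrite ip_conj ip_adj0r // conjc0. Qed.

End Adjoint.

Section Toral.
Variables (T Ts : 'I_2 -> V -> V).
Hypothesis adjT : forall k, is_adjoint ip (T k) (Ts k).
Hypothesis toralT : toral_2isometry T Ts.

Lemma toral_ip i j x z :
  ip (T i (T j x)) (T i (T j z)) = ip (T i x) (T i z) + ip (T j x) (T j z) - ip x z.
Proof.
have := congr1 (ip^~ z) (toralT i j x).
rewrite !(ipDl, ipNl) ip0l -!(ip_adjr (adjT _)) => toral_z.
by rewrite -[LHS]subr0 -toral_z; ring.
Qed.

Lemma toral_ip_iter i k x z :
  ip (iter k (T i) x) (iter k (T i) z) = k%:R * ip (T i x) (T i z) - (k%:R - 1) * ip x z.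
Proof.
elim: k x z => [|k IHk] x z; first by rewrite /=; ring.
by rewrite !iterSr IHk toral_ip; ring.
Qed.

Lemma toral_ip_T_iter i j k x z :
  ip (T j (iter k (T i) x)) (T j (iter k (T i) z))
  = ip (T j x) (T j z) + k%:R * ip (T i x) (T i z) - k%:R * ip x z.
Proof.
elim: k x z => [|k IHk] x z; first by rewrite /=; ring.
by rewrite !iterSr IHk !toral_ip; ring.
Qed.

Lemma toral_ip_iter2 i j k l x z :
  ip (iter l (T j) (iter k (T i) x)) (iter l (T j) (iter k (T i) z))
  = k%:R * ip (T i x) (T i z) + l%:R * ip (T j x) (T j z)
    - (k%:R + l%:R - 1) * ip x z.
Proof. by rewrite toral_ip_iter toral_ip_T_iter toral_ip_iter; ring. Qed.

Lemma toral_adj_iter_sum i j k l x :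
  iter k (Ts i) (iter k (T i) x) + iter l (Ts j) (iter l (T j) x) - x
  = k%:R *: Ts i (T i x) + l%:R *: Ts j (T j x) - (k%:R + l%:R - 1) *: x.
Proof.
apply: ip_ext => z; rewrite !(ipDl, ipNl, ipZl) !(ip_iter_adjl (adjT _)) -!(ip_adjr (adjT _)) //.
by rewrite !toral_ip_iter; ring.
Qed.

Lemma toral_adj_iter2 i j k l x :
  iter k (Ts i) (iter l (Ts j) (iter l (T j) (iter k (T i) x)))
  = k%:R *: Ts i (T i x) + l%:R *: Ts j (T j x) - (k%:R + l%:R - 1) *: x.
Proof.
apply: ip_ext => z; rewrite !(ipDl, ipNl, ipZl) !(ip_iter_adjl (adjT _)) -!(ip_adjr (adjT _)) //.
by rewrite toral_ip_iter2; ring.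
Qed.

Section WanderingVector.
Local Notation T1 := (T ord0).
Local Notation T2 := (T ord_max).
Hypothesis commT : forall x, T1 (T2 x) = T2 (T1 x).
Variable f0 : V.
Hypotheses (T1s_f0 : Ts ord0 f0 = 0) (T2s_f0 : Ts ord_max f0 = 0).
Hypothesis ip_T1_T2 : forall m p q, (1 <= q)%N ->
  ip (iter m T1 f0) (iter p T1 (iter q T2 f0)) = 0.
Hypothesis ip_T2_T1 : forall n p q, (1 <= p)%N ->
  ip (iter n T2 f0) (iter p T1 (iter q T2 f0)) = 0.

Definition wandering_ip m n p q :=
  (m == p)%:R * ip (iter n T2 f0) (iter q T2 f0)
  + (n == q)%:R * ip (iter m T1 f0) (iter p T1 f0)
  - (m == p)%:R * (n == q)%:R * ip f0 f0.

Lemma iter_T1_T2 k y : iter k T1 (T2 y) = T2 (iter k T1 y).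
Proof. by elim: k => [//|k IHk]; rewrite !iterS IHk commT. Qed.

Lemma wandering_ip_boundary m n p q :
  [|| n == 0%N, q == 0%N, m == 0%N | p == 0%N] ->
  ip (iter m T1 (iter n T2 f0)) (iter p T1 (iter q T2 f0)) = wandering_ip m n p q.
Proof.
rewrite /wandering_ip; case: n q => [|n] [|q] boundary.
- by rewrite /=; ring.
- by rewrite ip_T1_T2 // /= (ip_adj0r (adjT ord_max)) //; ring.
- by rewrite ip_conj ip_T1_T2 // conjc0 /= (ip_adj0l (adjT ord_max)) //; ring.
case: m p boundary => [|m] [|p] // _.
- by rewrite /=; ring.
- by rewrite ip_T2_T1 // /= (ip_adj0r (adjT ord0)) //; ring.
- by rewrite ip_conj ip_T2_T1 // conjc0 /= (ip_adj0l (adjT ord0)) //; ring.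
Qed.

Lemma wandering_ip_step m n p q :
  ip (iter m.+1 T1 (iter n.+1 T2 f0)) (iter p.+1 T1 (iter q.+1 T2 f0))
  = ip (iter m.+1 T1 (iter n T2 f0)) (iter p.+1 T1 (iter q T2 f0))
    + ip (iter m T1 (iter n.+1 T2 f0)) (iter p T1 (iter q.+1 T2 f0))
    - ip (iter m T1 (iter n T2 f0)) (iter p T1 (iter q T2 f0)).
Proof. by rewrite !iterS !iter_T1_T2 toral_ip. Qed.

Lemma wandering_ipE m n p q :
  ip (iter m T1 (iter n T2 f0)) (iter p T1 (iter q T2 f0)) = wandering_ip m n p q.
Proof.
move: {2}(m + n)%N (leqnn (m + n)) => s; elim: s m n p q => [|s IHs] m n p q.
  by case: m n => [|?] [|?] // _; apply: wandering_ip_boundary.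
case: n q m p => [|n] [|q] [|m] [|p] mn_le;
  try by apply: wandering_ip_boundary; rewrite ?orbT.
rewrite wandering_ip_step !IHs; try lia.
by rewrite /wandering_ip /=; ring.
Qed.

End WanderingVector.
End Toral.
End InnerProduct.

Theorem lemma6p1 (R : realType) (V : lmodType R[i]) (ip : V -> V -> R[i])
  (T Ts : 'I_2 -> V -> V) :
  is_hilbert ip ->
  (forall k : 'I_2, bounded_op ip (T k)) ->
  (forall k : 'I_2, is_adjoint ip (T k) (Ts k)) ->
  (forall x : V, T ord0 (T ord_max x) = T ord_max (T ord0 x)) ->
  toral_2isometry T Ts ->
  let T1 := T ord0 in let T2 := T ord_max in
  let T1s := Ts ord0 in let T2s := Ts ord_max in
  (* (i) *)
  (forall (k l : nat) (x : V),
     iter k T1s (iter l T2s (iter l T2 (iter k T1 x)))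
       = iter k T1s (iter k T1 x) + iter l T2s (iter l T2 x) - x /\
     iter k T1s (iter k T1 x) + iter l T2s (iter l T2 x) - x
       = k%:R *: T1s (T1 x) + l%:R *: T2s (T2 x)
         - (k%:R + l%:R - 1) *: x) /\
  (* (ii) *)
  (forall f0 : V,
     T1s f0 = 0 -> T2s f0 = 0 ->
     (forall m p q : nat, (1 <= q)%N ->
        ip (iter m T1 f0) (iter p T1 (iter q T2 f0)) = 0) ->
     (forall n p q : nat, (1 <= p)%N ->
        ip (iter n T2 f0) (iter p T1 (iter q T2 f0)) = 0) ->
     forall m n p q : nat,
       let lhs := ip (iter m T1 (iter n T2 f0)) (iter p T1 (iter q T2 f0)) in
       (m <> p -> n <> q -> lhs = 0) /\
       (m = p -> n <> q -> lhs = ip (iter n T2 f0) (iter q T2 f0)) /\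
       (m <> p -> n = q -> lhs = ip (iter m T1 f0) (iter p T1 f0)) /\
       (m = p -> n = q ->
          lhs = ((ipnorm ip (iter m T1 f0)) ^+ 2 + (ipnorm ip (iter n T2 f0)) ^+ 2
                 - (ipnorm ip f0) ^+ 2)%:C)).
Proof.
move=> [ip_inner _] _ adjT commT toralT; cbv zeta.
split=> [k l x | f0 T1s_f0 T2s_f0 ip_T1_T2 ip_T2_T1 m n p q].
  rewrite (toral_adj_iter_sum ip_inner adjT toralT).
  by split=> //; apply: (toral_adj_iter2 ip_inner adjT toralT).
rewrite /= (wandering_ipE ip_inner adjT toralT commT T1s_f0 T2s_f0 ip_T1_T2 ip_T2_T1).
rewrite /wandering_ip.
split; [|split; [|split]].
- by move=> /eqP/negbTE -> /eqP/negbTE -> /=; ring.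
- by move=> -> /eqP/negbTE ->; rewrite eqxx /=; ring.
- by move=> /eqP/negbTE -> ->; rewrite eqxx /=; ring.
- by move=> -> ->; rewrite !eqxx /= rmorphB rmorphD /= !(ipnorm_sqr ip_inner); ring.
Qed.
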